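(* Consider the generative logic with $\mu\to1$ in the setting below. Let $\Omega$ and $\Delta$ be finite multisets of time-indexed formulas such that $E'(\Delta)=\emptyset$. Then $p(\Omega\mid\Delta)=p(\Omega)$.
   Context: Let $\mathcal{L}$ be a propositional language and let $K,T\ge1$. There are data sequences $d_1,\dots,d_K$; repetitions are allowed, and data are identified by their index $k$. Each $d_k$ is associated with a sequence of models $m(d_k)=(m(d_k)^1,\dots,m(d_k)^T)$ of $\mathcal{L}$. The prior is $p(d_k)=1/K$. A time-indexed formula is written $\alpha^t$, with $\alpha\in\mathcal{L}$ and $1\le t\le T$. Write $[\![\alpha^t]\!]_k=1$ if $\alpha$ is true in $m(d_k)^t$, and $0$ otherwise. For $\mu\in(0,1)$ and a finite multiset $X$ of time-indexed formulas, define $$p(X\mid d_k,\mu)=\prod_{\alpha^t\in X}\mu^{[\![\alpha^t]\!]_k}(1-\mu)^{1-[\![\alpha^t]\!]_k}.$$ Then define $$p(\Omega)=\lim_{\mu\to1}\sum_k p(\Omega\mid d_k,\mu)\,p(d_k)$$ and $$p(\Omega\mid\Delta)=\lim_{\mu\to1}\frac{\sum_k p(\Omega\mid d_k,\mu)\,p(\Delta\mid d_k,\mu)\,p(d_k)}{\sum_k p(\Delta\mid d_k,\mu)\,p(d_k)}.$$ An index $k$ is an evidence of $X$ if $[\![\alpha^t]\!]_k=1$ for all $\alpha^t\in X$. Let $E(X)$ be the set of such indices. $X$ is called founded if $E(X)\neq\emptyset$. Let $MFS(\Delta)$ be the set of nonempty founded sub-multisets $S\subseteq\Delta$ that have maximum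 cardinality among all nonempty founded sub-multisets of $\Delta$. Set $E'(\Delta)=\bigcup_{S\in MFS(\Delta)}E(S)$. This union is empty if $MFS(\Delta)=\emptyset$. Thus $E'(\Delta)=\emptyset$ iff no index is an evidence of any singleton of $\Delta$. *)

From HB Require Import structures.
From mathcomp Require Import all_boot all_order all_algebra.
From mathcomp Require Import all_classical all_reals all_analysis.
Set Implicit Arguments. Unset Strict Implicit. Unset Printing Implicit Defensive.
Import Order.TTheory GRing.Theory Num.Theory.
Import numFieldNormedType.Exports.
Local Open Scope classical_set_scope.
Local Open Scope ring_scope.

Inductive form (A : Type) : Type :=
  | FAtom of A
  | FBot
  | FNeg of form A
  | FAnd of form A & form A
  | FOr of form A & form A
  | FImp of form A & form A.

Definition model (A : Type) := A -> bool.

Fixpoint sat (A : Type) (v : model A) (f : form A) : bool :=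
  match f with
  | FAtom a => v a
  | FBot => false
  | FNeg g => ~~ sat v g
  | FAnd g h => sat v g && sat v h
  | FOr g h => sat v g || sat v h
  | FImp g h => sat v g ==> sat v h
  end.

Definition tform (A : Type) (T : nat) := (form A * 'I_T)%type.

(* Finite multisets of time-indexed formulas, represented as sequences
   (all notions below are invariant under permutation). *)
Definition tmset (A : Type) (T : nat) := seq (tform A T).

Section Gen.
Variables (A : Type) (K T : nat) (m : 'I_K -> 'I_T -> model A).

Definition truth (k : 'I_K) (x : tform A T) : bool := sat (m k x.2) x.1.

Definition p_given (R : realType) (X : tmset A T) (k : 'I_K) (mu : R) : R :=
  \prod_(x <- X) (mu ^+ nat_of_bool (truth k x) * (1 - mu) ^+ (1 - nat_of_bool (truth k x))).

Definition prior (R : realType) (k : 'I_K) : R := (K%:R)^-1.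

Definition p_mu (R : realType) (Om : tmset A T) (mu : R) : R :=
  \sum_(k < K) p_given Om k mu * prior R k.

Definition pcond_mu (R : realType) (Om De : tmset A T) (mu : R) : R :=
  (\sum_(k < K) p_given Om k mu * p_given De k mu * prior R k) /
  (\sum_(k < K) p_given De k mu * prior R k).

Definition prob (R : realType) (Om : tmset A T) : R := lim (p_mu Om @ 1^'-).
Definition pcond (R : realType) (Om De : tmset A T) : R :=
  lim (pcond_mu Om De @ 1^'-).

Definition evidence (k : 'I_K) (X : tmset A T) : Prop := all (truth k) X.

Definition founded (X : tmset A T) : Prop := exists k, evidence k X.

(* Sub-multisets of Delta are given by masks: S = mask b Delta. *)
Definition is_MFS (De : tmset A T) (b : bitseq) : Prop :=
  [/\ size b = size De,
      (0 < size (mask b De))%N,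
      founded (mask b De) &
      forall b' : bitseq, (0 < size (mask b' De))%N -> founded (mask b' De) ->
        (size (mask b' De) <= size (mask b De))%N].

Definition in_Eprime (De : tmset A T) (k : 'I_K) : Prop :=
  exists b, is_MFS De b /\ evidence k (mask b De).

End Gen.

From HB Require Import structures.
From mathcomp Require Import all_boot all_order all_algebra.
From mathcomp Require Import all_classical all_reals all_analysis.
Set Implicit Arguments. Unset Strict Implicit. Unset Printing Implicit Defensive.
Import Order.TTheory GRing.Theory Num.Theory.
Import numFieldNormedType.Exports.
Local Open Scope classical_set_scope.
Local Open Scope ring_scope.

(* If some index satisfied some formula of Delta, the nonempty founded
   sub-multisets of Delta would exist, a largest one would exist, and any of
   its evidences would lie in E'(Delta).  So E'(Delta) = {} means that every
   formula of Delta is false at every index; then p(Delta | d_k, mu) equals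
   (1 - mu)^|Delta| for all k, and for mu < 1 this common factor cancels from
   the ratio defining p(Omega | Delta), leaving the sum defining p(Omega).
   That sum is a polynomial in mu, so both limits exist and equal its value
   at mu = 1. *)

Lemma mask_resize (X : Type) (s : seq X) (b : bitseq) :
  exists2 b' : bitseq, size b' = size s & mask b' s = mask b s.
Proof.
elim: s b => [|x s IHs] [|c b] /=.
- by exists [::].
- by exists [::].
- by exists (nseq (size s).+1 false); rewrite ?size_nseq ?mask_false.
- by have [b' <- <-] := IHs b; exists (c :: b').
Qed.

Lemma has_mask_all (X : Type) (p : pred X) (s : seq X) : has p s ->
  exists b : bitseq, [/\ size b = size s, (0 < size (mask b s))%N & all p (mask b s)].
Proof.
elim: s => [|x s IHs] //= /orP [px | /IHs [b [sz_b mask_gt0 all_p]]].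
  by exists (true :: nseq (size s) false); rewrite /= size_nseq mask_false /= px.
by exists (false :: b); rewrite /= sz_b.
Qed.

Section Generative.
Variables (A : Type) (K T : nat) (m : 'I_K -> 'I_T -> model A).

Lemma Eprime_witness (De : tmset A T) (k : 'I_K) :
  has (truth m k) De -> exists k', in_Eprime m De k'.
Proof.
move=> /has_mask_all [b0 [sz_b0 b0_gt0 b0_ev]].
pose founded_mask (b : (size De).-tuple bool) :=
  (0 < size (mask b De))%N && [exists k, all (truth m k) (mask b De)].
have founded_b0 : founded_mask (Tuple (introT eqP sz_b0)).
  by rewrite /founded_mask /= b0_gt0; apply/existsP; exists k.
have [b /andP [b_gt0 /existsP [kb b_ev]] b_max] :=
  arg_maxnP (fun b : (size De).-tuple bool => size (mask b De)) founded_b0.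
exists kb, (val b); split=> //; split; rewrite ?size_tuple //; first by exists kb.
move=> b1 + [k1]; have [b2 sz_b2 <-] := mask_resize De b1 => b2_gt0 b2_ev.
apply: (b_max (Tuple (introT eqP sz_b2))).
by rewrite /founded_mask /= b2_gt0; apply/existsP; exists k1.
Qed.

Variable R : realType.

Lemma p_given_untrue (X : tmset A T) (k : 'I_K) (mu : R) :
  ~~ has (truth m k) X -> p_given m X k mu = (1 - mu) ^+ size X.
Proof.
rewrite /p_given; elim: X => [|x X IHX]; first by rewrite big_nil.
by rewrite big_cons /= negb_or => /andP [/negbTE -> /IHX ->]; rewrite mul1r exprS.
Qed.

Lemma pcond_mu_untrue (Om De : tmset A T) (mu : R) : (0 < K)%N ->
  (forall k, ~~ has (truth m k) De) -> mu != 1 ->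
  pcond_mu m Om De mu = p_mu m Om mu.
Proof.
move=> K_gt0 untrue mu_neq1; rewrite /pcond_mu /p_mu /prior.
under eq_bigr => k _ do rewrite (p_given_untrue _ (untrue k)) mulrAC.
under [X in _ / X]eq_bigr => k _ do rewrite (p_given_untrue _ (untrue k)).
rewrite -mulr_suml -mulr_sumr sumr_const card_ord -(mulr_natr K%:R^-1).
rewrite mulVf ?pnatr_eq0 -?lt0n // mulr1 mulfK //.
by rewrite expf_neq0 // subr_eq0 eq_sym.
Qed.

Lemma continuous_p_mu (Om : tmset A T) : continuous (p_mu m Om : R -> R).
Proof.
pose P : {poly R} := \sum_(k < K) \prod_(x <- Om)
  ('X ^+ truth m k x * (1 - 'X) ^+ (1 - truth m k x)) * (K%:R^-1)%:P.
have -> : p_mu m Om = horner P.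
  apply: funext => mu; rewrite /P /p_mu horner_sum; apply: eq_bigr => k _.
  rewrite hornerM hornerC horner_prod /p_given /prior; congr (_ * _).
  by apply: eq_bigr => x _; rewrite hornerM !horner_exp hornerD hornerN hornerC hornerX.
by move=> mu; exact: continuous_horner.
Qed.

Lemma p_mu_cvg_left (Om : tmset A T) : p_mu m Om @ (1 : R)^'- --> p_mu m Om 1.
Proof. exact/cvg_at_left_filter/continuous_p_mu. Qed.

End Generative.

Theorem theorem2 (R : realType) (A : Type) (K T : nat) (hK : (1 <= K)%N) (hT : (1 <= T)%N)
  (m : 'I_K -> 'I_T -> model A) (Om De : tmset A T) :
  (forall k : 'I_K, ~ in_Eprime m De k) ->
  [/\ p_mu m Om @ (1 : R)^'- --> prob m R Om,
      pcond_mu m Om De @ (1 : R)^'- --> pcond m R Om De &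
      pcond m R Om De = prob m R Om].
Proof.
move=> Eprime_empty.
have untrue k : ~~ has (truth m k) De.
  by apply/negP => /Eprime_witness [k' ?]; apply: (Eprime_empty k').
have p_mu_cvg : p_mu m Om @ (1 : R)^'- --> p_mu m Om 1 by exact: p_mu_cvg_left.
have pcond_mu_cvg : pcond_mu m Om De @ (1 : R)^'- --> p_mu m Om 1.
  apply: cvg_trans p_mu_cvg; apply: near_eq_cvg; near=> mu.
  by rewrite pcond_mu_untrue // lt_eqF //; near: mu; exact: nbhs_left_lt.
have -> : prob m R Om = p_mu m Om 1 by exact: cvg_lim.
have -> : pcond m R Om De = p_mu m Om 1 by exact: cvg_lim.
by split.
Unshelve. all: end_near.
Qed.
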